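(* For the games $\mathcal G$ and $\mathcal G^{\rm sm}$: (a) a B-QGNE of $\mathcal G$ always exists; (b) a QGNE of $\mathcal G^{\rm sm}$ and a restricted B-QGNE of $\mathcal G$ exist provided $\mathcal P\ne\emptyset$; (c) if $\mathbf x^\star$ is a (restricted) B-QGNE of $\mathcal G$ satisfying constraint (C$_q$) for all $q=1,\dots,Q$, then $\mathbf x^\star$ is a QGNE of $\mathcal G^{\rm sm}$; (d) if $\mathbf x^\star$ is a QGNE of $\mathcal G^{\rm sm}$, then $\mathbf x^\star$ is a restricted B-QGNE of $\mathcal G$.
   Context: Fix integers $Q,J\ge1$, noise power $\sigma^2>0$, budgets $P_q>0$ ($q=1,\dots,Q$) and $P^{J}_j>0$ ($j=1,\dots,J$), and positive channel gains $H^{SD}_{qq},H^{SE}_{qe},H^{JD}_{jq},H^{JE}_{je}$. Variables: $p_q\ge0$ and $p^J_{jq}\ge0$; $\mathbf p^J_q=(p^J_{jq})_{j=1}^J$, $\mathbf x_q=(p_q,\mathbf p^J_q)$, $\mathbf x=(\mathbf x_q)_{q=1}^Q$, $\mathbf p^J_{-q}=(\mathbf p^J_r)_{r\ne q}$. Define $r_{qq}(\mathbf x_q)=\log\big(1+\frac{H^{SD}_{qq}p_q}{\sigma^2+\sum_jH^{JD}_{jq}p^J_{jq}}\big)$, $r_{qe}(\mathbf x_q)=\log\big(1+\frac{H^{SE}_{qe}p_q}{\sigma^2+\sum_jH^{JE}_{je}p^J_{jq}}\big)$, $\tilde r^s_q=r_{qq}-r_{qe}$, $r^s_q=\max(0,\tilde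 r^s_q)$. Constraint (C$_q$): $\sum_{j=1}^J(H^{SD}_{qq}H^{JE}_{je}-H^{SE}_{qe}H^{JD}_{jq})p^J_{jq}+(H^{SD}_{qq}-H^{SE}_{qe})\sigma^2\ge0$. $\mathcal P_q(\mathbf p^J_{-q})=\{\mathbf x_q\ge\mathbf 0: p_q\le P_q,\ \sum_{r=1}^Qp^J_{jr}\le P^J_j\ \forall j\}$ (with $p^J_{jr}$, $r\neq q$, fixed by $\mathbf p^J_{-q}$); $\mathcal P^{\rm sm}_q(\mathbf p^J_{-q})=\{\mathbf x_q\in\mathcal P_q(\mathbf p^J_{-q}):\text{(C}_q\text{) holds}\}$; $\mathcal P=\{\mathbf x\ge\mathbf 0: p_q\le P_q \text{ and (C}_q\text{) for all }q,\ \sum_{r}p^J_{jr}\le P^J_j\ \forall j\}$. Game $\mathcal G$: player $q$ maximizes $r^s_q(\mathbf x_q)$ over $\mathcal P_q(\mathbf p^J_{-q})$; game $\mathcal G^{\rm sm}$: player $q$ maximizes $\tilde r^s_q(\mathbf x_q)$ over $\mathcal P^{\rm sm}_q(\mathbf p^J_{-q})$. Let $r^{s\prime}_q(\mathbf x_q;\mathbf d)$ denote the one-sided directional derivative of $r^s_q$ at $\mathbf x_q$ in direction $\mathbf d$. A B-QGNE of $\mathcal G$ is $\mathbf x^\star$ such that for all $q$: $\mathbf x^\star_q\in\mathcal P_q(\mathbf p^{J\star}_{-q})$ and $r^{s\prime}_q(\mathbf x^\star_q;\mathbf x_q-\mathbf x^\star_q)\le0$ for all $\mathbf x_q\in\mathcal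 P_q(\mathbf p^{J\star}_{-q})$. A restricted B-QGNE of $\mathcal G$ is $\mathbf x^\star$ such that for all $q$: $\mathbf x^\star_q\in\mathcal P_q(\mathbf p^{J\star}_{-q})$ and $r^{s\prime}_q(\mathbf x^\star_q;\mathbf x_q-\mathbf x^\star_q)\le0$ for all $\mathbf x_q\in\mathcal P^{\rm sm}_q(\mathbf p^{J\star}_{-q})$. A QGNE of $\mathcal G^{\rm sm}$ is $\mathbf x^\star$ such that for all $q$: $\mathbf x^\star_q\in\mathcal P^{\rm sm}_q(\mathbf p^{J\star}_{-q})$ and $\nabla\tilde r^s_q(\mathbf x^\star_q)^T(\mathbf x_q-\mathbf x^\star_q)\le0$ for all $\mathbf x_q\in\mathcal P^{\rm sm}_q(\mathbf p^{J\star}_{-q})$. *)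

From Stdlib Require Import Reals Lra.
Open Scope R_scope.

Fixpoint rsum (n : nat) (f : nat -> R) : R :=
  match n with O => 0 | S k => rsum k f + f k end.

(* System data. Players q = 0..Q-1, jammers j = 0..J-1, single eavesdropper e. *)
Record params := Params {
  NQ : nat; NJ : nat; sig2 : R;
  Pb : nat -> R;
  PJb : nat -> R;
  HSD : nat -> R;
  HSE : nat -> R;
  HJD : nat -> nat -> R;    (* HJD j q = H^JD_jq *)
  HJE : nat -> R
}.

(* A local strategy x_q is a vector v : nat -> R with
   v 0 = p_q and v (S j) = p^J_{jq} (j = 0..J-1).
   A global profile X : nat -> (nat -> R) gives X q = x_q. *)

Definition r_qq (s : params) (q : nat) (v : nat -> R) : R :=
  ln (1 + HSD s q * v 0%nat /
          (sig2 s + rsum (NJ s) (fun j => HJD s j q * v (S j)))).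

Definition r_qe (s : params) (q : nat) (v : nat -> R) : R :=
  ln (1 + HSE s q * v 0%nat /
          (sig2 s + rsum (NJ s) (fun j => HJE s j * v (S j)))).

Definition rt_s (s : params) (q : nat) (v : nat -> R) : R := r_qq s q v - r_qe s q v.
Definition r_s (s : params) (q : nat) (v : nat -> R) : R := Rmax 0 (rt_s s q v).

Definition Cq (s : params) (q : nat) (v : nat -> R) : Prop :=
  rsum (NJ s) (fun j => (HSD s q * HJE s j - HSE s q * HJD s j q) * v (S j))
  + (HSD s q - HSE s q) * sig2 s >= 0.

(* v in P_q(p^J_{-q}), the other players' jamming powers taken from X *)
Definition inPq (s : params) (X : nat -> nat -> R) (q : nat) (v : nat -> R) : Prop :=
  (forall k, (k <= NJ s)%nat -> 0 <= v k) /\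
  v 0%nat <= Pb s q /\
  (forall j, (j < NJ s)%nat ->
     rsum (NQ s) (fun r => if Nat.eq_dec r q then v (S j) else X r (S j)) <= PJb s j).

Definition inPsm (s : params) (X : nat -> nat -> R) (q : nat) (v : nat -> R) : Prop :=
  inPq s X q v /\ Cq s q v.

Definition P_nonempty (s : params) : Prop :=
  exists X : nat -> nat -> R,
    (forall q, (q < NQ s)%nat ->
       (forall k, (k <= NJ s)%nat -> 0 <= X q k) /\ X q 0%nat <= Pb s q /\ Cq s q (X q)) /\
    (forall j, (j < NJ s)%nat -> rsum (NQ s) (fun r => X r (S j)) <= PJb s j).

Definition is_dirderiv (f : (nat -> R) -> R) (v d : nat -> R) (L : R) : Prop :=
  forall eps, 0 < eps -> exists delta, 0 < delta /\
    forall t, 0 < t < delta ->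
      Rabs ((f (fun k => v k + t * d k) - f v) / t - L) < eps.

Definition is_gradient (J : nat) (f : (nat -> R) -> R) (v g : nat -> R) : Prop :=
  forall k, (k <= J)%nat ->
    derivable_pt_lim (fun t => f (fun i => if Nat.eq_dec i k then t else v i)) (v k) (g k).

Definition dotJ (J : nat) (g d : nat -> R) : R := rsum (S J) (fun k => g k * d k).

Definition vsub (w v : nat -> R) : nat -> R := fun k => w k - v k.

Definition BQGNE (s : params) (X : nat -> nat -> R) : Prop :=
  forall q, (q < NQ s)%nat ->
    inPq s X q (X q) /\
    forall v, inPq s X q v ->
      exists L, is_dirderiv (r_s s q) (X q) (vsub v (X q)) L /\ L <= 0.

Definition rBQGNE (s : params) (X : nat -> nat -> R) : Prop :=
  forall q, (q < NQ s)%nat ->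
    inPq s X q (X q) /\
    forall v, inPsm s X q v ->
      exists L, is_dirderiv (r_s s q) (X q) (vsub v (X q)) L /\ L <= 0.

Definition QGNE_sm (s : params) (X : nat -> nat -> R) : Prop :=
  forall q, (q < NQ s)%nat ->
    inPsm s X q (X q) /\
    forall v, inPsm s X q v ->
      exists g, is_gradient (NJ s) (rt_s s q) (X q) g /\
                dotJ (NJ s) g (vsub v (X q)) <= 0.

Definition valid_params (s : params) : Prop :=
  (1 <= NQ s)%nat /\ (1 <= NJ s)%nat /\ 0 < sig2 s /\
  (forall q, (q < NQ s)%nat -> 0 < Pb s q /\ 0 < HSD s q /\ 0 < HSE s q) /\
  (forall j, (j < NJ s)%nat -> 0 < PJb s j /\ 0 < HJE s j) /\
  (forall j q, (j < NJ s)%nat -> (q < NQ s)%nat -> 0 < HJD s j q).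

(* Each utility depends only on the player's own strategy, so both games are
   potential games with the sum of the utilities as potential.
   - Rates: both r_qq and r_qe are instances of one rate function, whose
     gradient and derivative along lines are computed once; (C_q) is exactly
     the comparison of the two signal-to-interference ratios, hence forces
     rt_s >= 0.
   - First-order conditions: the one-sided directional derivative of
     r_s = max(0, rt_s) equals the gradient pairing of rt_s where rt_s > 0
     and its positive part where rt_s = 0.  Under (C_q) the two first-order
     conditions are therefore equivalent, which gives (c) and (d).
   - Existence: a maximizer of the potential over the joint feasible set is a
     profile of best responses; along feasible segments this yields the
     first-order conditions of G (clipped potential, budgets only) and of G^sm
     (smooth potential over P).  This gives (a) and,
     together with (d), (b). *)

From Stdlib Require Import Reals Lra Lia FunctionalExtensionality.
Open Scope R_scope.

Lemma rsum_ext (n : nat) (f g : nat -> R) :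
  (forall j, (j < n)%nat -> f j = g j) -> rsum n f = rsum n g.
Proof.
  induction n; intros H; simpl; [reflexivity|].
  rewrite IHn by (intros; apply H; lia). rewrite H by lia. reflexivity.
Qed.

Lemma rsum_plus (n : nat) (f g : nat -> R) :
  rsum n (fun j => f j + g j) = rsum n f + rsum n g.
Proof. induction n; simpl; [ring|rewrite IHn; ring]. Qed.

Lemma rsum_scal (n : nat) (c : R) (f : nat -> R) :
  rsum n (fun j => c * f j) = c * rsum n f.
Proof. induction n; simpl; [ring|rewrite IHn; ring]. Qed.

Lemma rsum_zero (n : nat) : rsum n (fun _ => 0) = 0.
Proof. induction n; simpl; [ring|rewrite IHn; ring]. Qed.

Lemma rsum_nonneg (n : nat) (f : nat -> R) :
  (forall j, (j < n)%nat -> 0 <= f j) -> 0 <= rsum n f.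
Proof.
  induction n; intros H; simpl; [lra|].
  assert (0 <= rsum n f) by (apply IHn; intros; apply H; lia).
  assert (0 <= f n) by (apply H; lia). lra.
Qed.

Lemma rsum_le_term (n : nat) (f : nat -> R) (k : nat) :
  (forall j, (j < n)%nat -> 0 <= f j) -> (k < n)%nat -> f k <= rsum n f.
Proof.
  induction n; intros H Hk; [lia|]. simpl.
  assert (0 <= f n) by (apply H; lia).
  destruct (Nat.eq_dec k n) as [-> | Hne].
  - assert (0 <= rsum n f) by (apply rsum_nonneg; intros; apply H; lia). lra.
  - assert (f k <= rsum n f) by (apply IHn; [intros; apply H; lia|lia]). lra.
Qed.

Lemma rsum_update (n q : nat) (A : R) (B : nat -> R) :
  (q < n)%nat ->
  rsum n (fun r => if Nat.eq_dec r q then A else B r) = rsum n B - B q + A.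
Proof.
  induction n; intros Hq; [lia|]. simpl.
  destruct (Nat.eq_dec n q) as [-> | Hne].
  - rewrite (rsum_ext q _ B); [ring|].
    intros j Hj. destruct (Nat.eq_dec j q); [lia|reflexivity].
  - rewrite IHn by lia. ring.
Qed.

Lemma rsum_shift (n : nat) (f : nat -> R) :
  rsum (S n) f = f 0%nat + rsum n (fun j => f (S j)).
Proof. induction n; simpl in *; [ring|rewrite IHn; ring]. Qed.

Lemma rsum_affine (n : nat) (c x d : nat -> R) (t : R) :
  rsum n (fun j => c j * (x j + t * d j)) =
  rsum n (fun j => c j * x j) + rsum n (fun j => c j * d j) * t.
Proof.
  rewrite (rsum_ext _ _ (fun j => c j * x j + t * (c j * d j))) by (intros; ring).
  rewrite rsum_plus, rsum_scal. ring.
Qed.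

Lemma dotJ_unit (J k : nat) (g : nat -> R) :
  (k <= J)%nat ->
  dotJ J g (fun i => if Nat.eq_dec i k then 1 else 0) = g k.
Proof.
  intros Hk. unfold dotJ.
  rewrite (rsum_ext _ _ (fun i => if Nat.eq_dec i k then g k else 0)).
  - rewrite rsum_update, rsum_zero by lia. ring.
  - intros j _. destruct (Nat.eq_dec j k); subst; ring.
Qed.

Lemma dotJ_minus (J : nat) (g1 g2 d : nat -> R) :
  dotJ J (fun k => g1 k - g2 k) d = dotJ J g1 d - dotJ J g2 d.
Proof.
  unfold dotJ.
  rewrite (rsum_ext _ _ (fun k => g1 k * d k + (-1) * (g2 k * d k))) by (intros; ring).
  rewrite rsum_plus, rsum_scal. ring.
Qed.

Lemma Rdiv_nonneg (a b : R) : 0 <= a -> 0 < b -> 0 <= a / b.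
Proof. intros; unfold Rdiv; apply Rmult_le_pos; [lra|left; apply Rinv_0_lt_compat; lra]. Qed.

Lemma ln_le_compat (a b : R) : 0 < a -> a <= b -> ln a <= ln b.
Proof.
  intros Ha Hab. destruct (Rle_lt_or_eq_dec _ _ Hab) as [Hl| ->]; [|lra].
  left; apply ln_increasing; lra.
Qed.

Lemma derivable_pt_lim_ln_ratio (a b c e t0 : R) :
  0 < c + e * t0 -> 0 <= a + b * t0 ->
  derivable_pt_lim (fun t => ln (1 + (a + b * t) / (c + e * t))) t0
    ((b * (c + e * t0) - e * (a + b * t0)) / ((c + e * t0) * ((c + e * t0) + (a + b * t0)))).
Proof.
  intros Hc Ha.
  set (f := fun t => 1 + (a + b * t) / (c + e * t)).
  assert (Hlin : forall u v, derivable_pt_lim (fun t => u + v * t) t0 v).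
  { intros u v.
    assert (H : derivable_pt_lim (fct_cte u + mult_real_fct v id)%F t0 (0 + v * 1)).
    { apply derivable_pt_lim_plus;
        [apply derivable_pt_lim_const|apply derivable_pt_lim_scal, derivable_pt_lim_id]. }
    rewrite Rplus_0_l, Rmult_1_r in H. exact H. }
  assert (Hf : derivable_pt_lim f t0
     (0 + (b * (c + e * t0) - e * (a + b * t0)) / (c + e * t0)²)).
  { apply (derivable_pt_lim_plus (fct_cte 1) (fun t => (a + b * t) / (c + e * t))).
    - apply derivable_pt_lim_const.
    - apply (derivable_pt_lim_div (fun t => a + b * t) (fun t => c + e * t));
        [apply Hlin|apply Hlin|lra]. }
  assert (Hpos : 0 < f t0).
  { unfold f. assert (0 <= (a + b * t0) / (c + e * t0)) by (apply Rdiv_nonneg; lra). lra. }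
  pose proof (derivable_pt_lim_comp f ln t0 _ _ Hf (derivable_pt_lim_ln _ Hpos)) as H.
  unfold comp, f in H.
  match goal with |- derivable_pt_lim _ _ ?L => replace L with
    (/ (1 + (a + b * t0) / (c + e * t0)) *
       (0 + (b * (c + e * t0) - e * (a + b * t0)) / (c + e * t0)²)) end.
  - exact H.
  - unfold Rsqr. field. split; lra.
Qed.

Lemma derivable_continuous_at (h : R -> R) (x l : R) :
  derivable_pt_lim h x l ->
  forall eps, 0 < eps -> exists delta, 0 < delta /\
    forall t, Rabs (t - x) < delta -> Rabs (h t - h x) < eps.
Proof.
  intros H eps Heps.
  pose proof (derivable_continuous_pt h x (exist _ l H)) as C.
  destruct (C eps Heps) as (alp & Halp & Hc).
  exists alp; split; [exact Halp|]. intros t Ht.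
  destruct (Req_dec t x) as [-> | Hne].
  - rewrite Rminus_diag, Rabs_R0; exact Heps.
  - apply (Hc t). split; [unfold D_x, no_cond; split; [exact I|congruence]|exact Ht].
Qed.

(* Right-hand limits at 0.  [is_dirderiv f v d L] is by definition
   [right_lim (fun t => (f (v + t d) - f v) / t) L]. *)

Definition right_lim (Q : R -> R) (L : R) : Prop :=
  forall eps, 0 < eps -> exists delta, 0 < delta /\
    forall t, 0 < t < delta -> Rabs (Q t - L) < eps.

Lemma right_lim_unique (Q : R -> R) (L1 L2 : R) :
  right_lim Q L1 -> right_lim Q L2 -> L1 = L2.
Proof.
  intros H1 H2. destruct (Req_dec L1 L2) as [|Hne]; [assumption|exfalso].
  set (eps := Rabs (L1 - L2) / 2).
  assert (Hpos : 0 < eps) by (unfold eps; apply Rdiv_lt_0_compat; [apply Rabs_pos_lt; lra|lra]).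
  destruct (H1 eps Hpos) as (d1 & Hd1 & C1). destruct (H2 eps Hpos) as (d2 & Hd2 & C2).
  set (t := Rmin d1 d2 / 2).
  assert (0 < Rmin d1 d2) by (apply Rmin_pos; lra).
  pose proof (Rmin_l d1 d2). pose proof (Rmin_r d1 d2).
  assert (A := C1 t ltac:(unfold t; lra)). assert (B := C2 t ltac:(unfold t; lra)).
  assert (Rabs (L1 - L2) <= Rabs (Q t - L1) + Rabs (Q t - L2)).
  { replace (L1 - L2) with (- (Q t - L1) + (Q t - L2)) by ring.
    eapply Rle_trans; [apply Rabs_triang|]. rewrite Rabs_Ropp. lra. }
  unfold eps in *. lra.
Qed.

Lemma right_lim_nonpos (Q : R -> R) (L : R) :
  right_lim Q L -> (forall t, 0 < t < 1 -> Q t <= 0) -> L <= 0.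
Proof.
  intros H HQ. destruct (Rle_or_lt L 0) as [|HL]; [assumption|exfalso].
  destruct (H L HL) as (d & Hd & Hc).
  set (t := Rmin d 1 / 2).
  assert (0 < Rmin d 1) by (apply Rmin_pos; lra).
  pose proof (Rmin_l d 1). pose proof (Rmin_r d 1).
  assert (Hc' := Hc t ltac:(unfold t; lra)). assert (HQ' := HQ t ltac:(unfold t; lra)).
  unfold Rabs in Hc'; destruct Rcase_abs; lra.
Qed.

Lemma right_lim_local (Q1 Q2 : R -> R) (L d0 : R) :
  0 < d0 -> (forall t, 0 < t < d0 -> Q1 t = Q2 t) -> right_lim Q2 L -> right_lim Q1 L.
Proof.
  intros Hd0 HQ H eps Heps. destruct (H eps Heps) as (d & Hd & Hc).
  exists (Rmin d d0). split; [apply Rmin_pos; lra|].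
  intros t Ht. pose proof (Rmin_l d d0). pose proof (Rmin_r d d0).
  rewrite HQ by lra. apply Hc; lra.
Qed.

Lemma right_lim_const (c : R) : right_lim (fun _ => c) c.
Proof.
  intros eps Heps. exists 1. split; [lra|]. intros t _.
  rewrite Rminus_diag, Rabs_R0. exact Heps.
Qed.

(* The positive part [Rmax 0] is 1-Lipschitz, hence commutes with limits. *)
Lemma right_lim_pos_part (Q : R -> R) (L : R) :
  right_lim Q L -> right_lim (fun t => Rmax 0 (Q t)) (Rmax 0 L).
Proof.
  intros H eps Heps. destruct (H eps Heps) as (d & Hd & Hc).
  exists d. split; [exact Hd|]. intros t Ht. specialize (Hc t Ht).
  assert (Hlip : Rabs (Rmax 0 (Q t) - Rmax 0 L) <= Rabs (Q t - L)).
  { unfold Rmax; destruct (Rle_dec 0 (Q t)); destruct (Rle_dec 0 L);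
      unfold Rabs; repeat destruct Rcase_abs; lra. }
  lra.
Qed.

Lemma derivable_right_lim (h : R -> R) (l : R) :
  derivable_pt_lim h 0 l -> right_lim (fun t => (h t - h 0) / t) l.
Proof.
  intros H eps Heps. destruct (H eps Heps) as (d & Hd). exists d; split; [apply cond_pos|].
  intros t Ht. specialize (Hd t ltac:(lra) ltac:(rewrite Rabs_right; lra)).
  rewrite Rplus_0_l in Hd. exact Hd.
Qed.

Lemma pos_part_right_derivative (h : R -> R) (l : R) :
  derivable_pt_lim h 0 l ->
  exists L, right_lim (fun t => (Rmax 0 (h t) - Rmax 0 (h 0)) / t) L /\
    (0 < h 0 -> L = l) /\ (h 0 = 0 -> L = Rmax 0 l).
Proof.
  intros H.
  destruct (Rtotal_order (h 0) 0) as [Hneg|[Hz|Hpos]].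
  - exists 0. split; [|split; intros; lra].
    destruct (derivable_continuous_at h 0 l H (- h 0) ltac:(lra)) as (d & Hd & Hc).
    apply (right_lim_local _ (fun _ => 0) _ d Hd); [|apply right_lim_const].
    intros t Ht.
    assert (Hht : Rabs (h t - h 0) < - h 0) by (apply Hc; rewrite Rminus_0_r, Rabs_right; lra).
    assert (h t < 0) by (unfold Rabs in Hht; destruct Rcase_abs; lra).
    rewrite !Rmax_left by lra. unfold Rdiv. ring.
  - exists (Rmax 0 l). split; [|split; intros; [lra|reflexivity]].
    apply (right_lim_local _ (fun t => Rmax 0 ((h t - h 0) / t)) _ 1); [lra| |].
    + intros t Ht. rewrite Hz, Rminus_0_r, (Rmax_left 0 0), Rminus_0_r by lra.
      unfold Rmax. destruct (Rle_dec 0 (h t)); destruct (Rle_dec 0 (h t / t)).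
      * reflexivity.
      * exfalso. apply n. apply Rdiv_nonneg; lra.
      * exfalso. apply n. replace (h t) with ((h t / t) * t) by (field; lra). nra.
      * unfold Rdiv; ring.
    + apply right_lim_pos_part, derivable_right_lim, H.
  - exists l. split; [|split; intros; [reflexivity|lra]].
    destruct (derivable_continuous_at h 0 l H (h 0) Hpos) as (d & Hd & Hc).
    apply (right_lim_local _ (fun t => (h t - h 0) / t) _ d Hd);
      [|apply derivable_right_lim, H].
    intros t Ht.
    assert (Hht : Rabs (h t - h 0) < h 0) by (apply Hc; rewrite Rminus_0_r, Rabs_right; lra).
    assert (0 < h t) by (unfold Rabs in Hht; destruct Rcase_abs; lra).
    rewrite !Rmax_right by lra. reflexivity.
Qed.

Lemma derivable_local_max_nonpos (h : R -> R) (l : R) :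
  derivable_pt_lim h 0 l -> (forall t, 0 < t < 1 -> h t <= h 0) -> l <= 0.
Proof.
  intros H Hm. apply (right_lim_nonpos _ _ (derivable_right_lim h l H)).
  intros t Ht. specialize (Hm t Ht). unfold Rdiv.
  assert (0 < / t) by (apply Rinv_0_lt_compat; lra). nra.
Qed.

(* Achievable rate of a link with direct gain [h], jammed through the gains
   [c j] by the powers [v (S j)] over the noise power [sig]; [v 0] is the
   transmit power.  Both [r_qq] and [r_qe] are instances. *)

Definition interference (sig : R) (J : nat) (c v : nat -> R) : R :=
  sig + rsum J (fun j => c j * v (S j)).

Definition rate (h sig : R) (J : nat) (c v : nat -> R) : R :=
  ln (1 + h * v 0%nat / interference sig J c v).

Definition rate_grad (h sig : R) (J : nat) (c v : nat -> R) (k : nat) : R :=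
  let I := interference sig J c v in
  match k with
  | O => h / (I + h * v 0%nat)
  | S j => - (h * v 0%nat) * c j / (I * (I + h * v 0%nat))
  end.

Definition nonneg_strategy (J : nat) (y : nat -> R) : Prop :=
  forall k, (k <= J)%nat -> 0 <= y k.

Lemma rate_well_posed (h sig : R) (J : nat) (c y : nat -> R) :
  0 < sig -> 0 <= h -> (forall j, (j < J)%nat -> 0 <= c j) -> nonneg_strategy J y ->
  0 < interference sig J c y /\ 0 <= h * y 0%nat.
Proof.
  intros Hsig Hh Hc Hy. split.
  - assert (0 <= rsum J (fun j => c j * y (S j))); [|unfold interference; lra].
    apply rsum_nonneg; intros j Hj. apply Rmult_le_pos; [apply Hc, Hj|apply Hy; lia].
  - apply Rmult_le_pos; [exact Hh|apply Hy; lia].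
Qed.

Lemma rate_line_deriv (h sig : R) (J : nat) (c x d : nat -> R) (t0 : R) :
  let y := fun k => x k + t0 * d k in
  0 < interference sig J c y -> 0 <= h * y 0%nat ->
  derivable_pt_lim (fun t => rate h sig J c (fun k => x k + t * d k)) t0
    (dotJ J (rate_grad h sig J c y) d).
Proof.
  intros y HI Hh.
  set (e := rsum J (fun j => c j * d (S j))).
  assert (Eline : forall t, interference sig J c (fun k => x k + t * d k)
                            = interference sig J c x + e * t).
  { intros t. unfold interference.
    rewrite (rsum_affine J c (fun j => x (S j)) (fun j => d (S j))). unfold e. ring. }
  assert (Ef : (fun t => rate h sig J c (fun k => x k + t * d k)) =
               (fun t => ln (1 + (h * x 0%nat + h * d 0%nat * t) /
                                 (interference sig J c x + e * t)))).
  { apply functional_extensionality; intros t. unfold rate. rewrite Eline.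
    do 3 f_equal. ring. }
  assert (EI : interference sig J c y = interference sig J c x + e * t0) by apply Eline.
  assert (Eh : h * y 0%nat = h * x 0%nat + h * d 0%nat * t0) by (unfold y; ring).
  rewrite Ef.
  replace (dotJ J (rate_grad h sig J c y) d) with
    ((h * d 0%nat * (interference sig J c x + e * t0)
      - e * (h * x 0%nat + h * d 0%nat * t0)) /
     ((interference sig J c x + e * t0) *
      ((interference sig J c x + e * t0) + (h * x 0%nat + h * d 0%nat * t0)))).
  { apply derivable_pt_lim_ln_ratio; lra. }
  unfold dotJ. rewrite rsum_shift. cbv beta iota zeta delta [rate_grad].
  set (I := interference sig J c y).
  rewrite (rsum_ext _ _ (fun j => (- (h * y 0%nat) / (I * (I + h * y 0%nat))) * (c j * d (S j))))
    by (intros; unfold Rdiv; ring).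
  rewrite rsum_scal. fold e. unfold I. rewrite EI, Eh. field. split; lra.
Qed.

Lemma rate_local (h sig : R) (J : nat) (c v w : nat -> R) :
  (forall k, (k <= J)%nat -> v k = w k) -> rate h sig J c v = rate h sig J c w.
Proof.
  intros H. unfold rate, interference. rewrite (H 0%nat) by lia.
  rewrite (rsum_ext _ (fun j => c j * v (S j)) (fun j => c j * w (S j))); [reflexivity|].
  intros j Hj. rewrite (H (S j)) by lia. reflexivity.
Qed.

Definition rate_D (s : params) (q : nat) : (nat -> R) -> R :=
  rate (HSD s q) (sig2 s) (NJ s) (fun j => HJD s j q).

Definition rate_E (s : params) (q : nat) : (nat -> R) -> R :=
  rate (HSE s q) (sig2 s) (NJ s) (HJE s).

Definition secrecy_grad (s : params) (q : nat) (y : nat -> R) (k : nat) : R :=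
  rate_grad (HSD s q) (sig2 s) (NJ s) (fun j => HJD s j q) y k -
  rate_grad (HSE s q) (sig2 s) (NJ s) (HJE s) y k.

Lemma rt_s_rates (s : params) (q : nat) (v : nat -> R) :
  rt_s s q v = rate_D s q v - rate_E s q v.
Proof. reflexivity. Qed.

Lemma valid_rates_well_posed (s : params) (q : nat) (y : nat -> R) :
  valid_params s -> (q < NQ s)%nat -> nonneg_strategy (NJ s) y ->
  (0 < interference (sig2 s) (NJ s) (fun j => HJD s j q) y /\ 0 <= HSD s q * y 0%nat) /\
  (0 < interference (sig2 s) (NJ s) (HJE s) y /\ 0 <= HSE s q * y 0%nat).
Proof.
  intros (_ & _ & Hsig & HP & HPJ & HJD') Hq Hy.
  destruct (HP q Hq) as (_ & H1 & H2). split; apply rate_well_posed; try lra; try exact Hy.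
  - intros j Hj. left. apply HJD'; assumption.
  - intros j Hj. left. apply (HPJ j Hj).
Qed.

Lemma rt_line_deriv (s : params) (q : nat) (x d : nat -> R) (t0 : R) :
  valid_params s -> (q < NQ s)%nat -> nonneg_strategy (NJ s) (fun k => x k + t0 * d k) ->
  derivable_pt_lim (fun t => rt_s s q (fun k => x k + t * d k)) t0
    (dotJ (NJ s) (secrecy_grad s q (fun k => x k + t0 * d k)) d).
Proof.
  intros Hs Hq Hy.
  destruct (valid_rates_well_posed s q _ Hs Hq Hy) as [[HD1 HD2] [HE1 HE2]].
  unfold secrecy_grad. rewrite dotJ_minus.
  apply (derivable_pt_lim_minus (fun t => rate_D s q (fun k => x k + t * d k))
                                (fun t => rate_E s q (fun k => x k + t * d k)));
    apply rate_line_deriv; assumption.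
Qed.

Lemma line_at_zero (x d : nat -> R) : (fun k => x k + 0 * d k) = x.
Proof. apply functional_extensionality; intros; ring. Qed.

Lemma rt_line_deriv0 (s : params) (q : nat) (x d : nat -> R) :
  valid_params s -> (q < NQ s)%nat -> nonneg_strategy (NJ s) x ->
  derivable_pt_lim (fun t => rt_s s q (fun k => x k + t * d k)) 0
    (dotJ (NJ s) (secrecy_grad s q x) d).
Proof.
  intros Hs Hq Hx. pose proof (rt_line_deriv s q x d 0 Hs Hq) as H.
  rewrite line_at_zero in H. exact (H Hx).
Qed.

(* [secrecy_grad] is the gradient of the secrecy rate (partial derivatives
   are derivatives along the coordinate lines). *)
Lemma rt_gradient (s : params) (q : nat) (y : nat -> R) :
  valid_params s -> (q < NQ s)%nat -> nonneg_strategy (NJ s) y ->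
  is_gradient (NJ s) (rt_s s q) y (secrecy_grad s q y).
Proof.
  intros Hs Hq Hy k Hk.
  set (e := fun i : nat => if Nat.eq_dec i k then 1 else 0).
  set (x := fun i => y i - y k * e i).
  assert (Ecoord : (fun t => rt_s s q (fun i => if Nat.eq_dec i k then t else y i)) =
                   (fun t => rt_s s q (fun i => x i + t * e i))).
  { apply functional_extensionality; intros t. f_equal.
    apply functional_extensionality; intros i. unfold x, e.
    destruct (Nat.eq_dec i k); subst; ring. }
  assert (Ey : (fun i => x i + y k * e i) = y).
  { apply functional_extensionality; intros i. unfold x. ring. }
  pose proof (rt_line_deriv s q x e (y k) Hs Hq) as H. rewrite Ey in H.
  rewrite Ecoord. unfold e in H |- *. rewrite dotJ_unit in H by exact Hk.
  exact (H Hy).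
Qed.

(* Partial derivatives are unique, so any gradient of [rt_s] is [secrecy_grad]. *)
Lemma rt_gradient_unique (s : params) (q : nat) (y g : nat -> R) :
  valid_params s -> (q < NQ s)%nat -> nonneg_strategy (NJ s) y ->
  is_gradient (NJ s) (rt_s s q) y g -> forall k, (k <= NJ s)%nat -> g k = secrecy_grad s q y k.
Proof.
  intros Hs Hq Hy Hg k Hk.
  exact (uniqueness_limite _ _ _ _ (Hg k Hk) (rt_gradient s q y Hs Hq Hy k Hk)).
Qed.

Definition Cq_slack (s : params) (q : nat) (v : nat -> R) : R :=
  rsum (NJ s) (fun j => (HSD s q * HJE s j - HSE s q * HJD s j q) * v (S j))
  + (HSD s q - HSE s q) * sig2 s.

(* (C_q) compares the two signal-to-interference ratios: it reads
   [H^SD * I_E - H^SE * I_D >= 0] in terms of the interference levels. *)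
Lemma Cq_slack_cross (s : params) (q : nat) (y : nat -> R) :
  Cq_slack s q y = HSD s q * interference (sig2 s) (NJ s) (HJE s) y
                   - HSE s q * interference (sig2 s) (NJ s) (fun j => HJD s j q) y.
Proof.
  unfold Cq_slack, interference.
  rewrite (rsum_ext _ _ (fun j => HSD s q * (HJE s j * y (S j))
                                  + (- HSE s q) * (HJD s j q * y (S j)))) by (intros; ring).
  rewrite rsum_plus, !rsum_scal. ring.
Qed.

(* Hence (C_q) makes the secrecy rate nonnegative, so [r_s = rt_s] there. *)
Lemma Cq_secrecy_nonneg (s : params) (q : nat) (y : nat -> R) :
  valid_params s -> (q < NQ s)%nat -> nonneg_strategy (NJ s) y -> Cq s q y -> 0 <= rt_s s q y.
Proof.
  intros Hs Hq Hy HC.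
  destruct (valid_rates_well_posed s q y Hs Hq Hy) as [[HD HyD] [HE HyE]].
  set (ID := interference (sig2 s) (NJ s) (fun j => HJD s j q) y) in *.
  set (IE := interference (sig2 s) (NJ s) (HJE s) y) in *.
  assert (Hcross : HSE s q * ID <= HSD s q * IE).
  { change (Cq_slack s q y >= 0) in HC. rewrite Cq_slack_cross in HC. fold ID IE in HC. lra. }
  assert (Hy0 : 0 <= y 0%nat) by (apply Hy; lia).
  assert (Hratio : HSE s q * y 0%nat / IE <= HSD s q * y 0%nat / ID).
  { unfold Rdiv. apply Rmult_le_reg_r with (IE * ID); [nra|].
    replace (HSE s q * y 0%nat * / IE * (IE * ID)) with (HSE s q * ID * y 0%nat) by (field; lra).
    replace (HSD s q * y 0%nat * / ID * (IE * ID)) with (HSD s q * IE * y 0%nat) by (field; lra).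
    nra. }
  assert (0 <= HSE s q * y 0%nat / IE) by (apply Rdiv_nonneg; lra).
  assert (ln (1 + HSE s q * y 0%nat / IE) <= ln (1 + HSD s q * y 0%nat / ID))
    by (apply ln_le_compat; lra).
  rewrite rt_s_rates. unfold rate_D, rate_E, rate. fold ID IE. lra.
Qed.

Lemma rs_dirderiv (s : params) (q : nat) (x d : nat -> R) :
  valid_params s -> (q < NQ s)%nat -> nonneg_strategy (NJ s) x ->
  exists L, is_dirderiv (r_s s q) x d L /\
    (0 < rt_s s q x -> L = dotJ (NJ s) (secrecy_grad s q x) d) /\
    (rt_s s q x = 0 -> L = Rmax 0 (dotJ (NJ s) (secrecy_grad s q x) d)).
Proof.
  intros Hs Hq Hx.
  destruct (pos_part_right_derivative _ _ (rt_line_deriv0 s q x d Hs Hq Hx))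
    as (L & HL & Hpos & Hzero).
  cbv beta in HL, Hpos, Hzero. rewrite line_at_zero in HL, Hpos, Hzero.
  exists L. split; [exact HL|split; assumption].
Qed.

Lemma dirderiv_nonpos_grad (s : params) (q : nat) (x d : nat -> R) (L : R) :
  valid_params s -> (q < NQ s)%nat -> nonneg_strategy (NJ s) x -> Cq s q x ->
  is_dirderiv (r_s s q) x d L -> L <= 0 -> dotJ (NJ s) (secrecy_grad s q x) d <= 0.
Proof.
  intros Hs Hq Hx HC HD HL.
  destruct (rs_dirderiv s q x d Hs Hq Hx) as (L' & HD' & Hpos & Hzero).
  assert (L = L') as <- by exact (right_lim_unique _ _ _ HD HD').
  destruct (Rle_lt_or_eq_dec _ _ (Cq_secrecy_nonneg s q x Hs Hq Hx HC)) as [Hp|He].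
  - rewrite <- (Hpos Hp). exact HL.
  - pose proof (Rmax_r 0 (dotJ (NJ s) (secrecy_grad s q x) d)).
    rewrite (Hzero (eq_sym He)) in HL. lra.
Qed.

Lemma grad_nonpos_dirderiv (s : params) (q : nat) (x d : nat -> R) :
  valid_params s -> (q < NQ s)%nat -> nonneg_strategy (NJ s) x -> Cq s q x ->
  dotJ (NJ s) (secrecy_grad s q x) d <= 0 ->
  exists L, is_dirderiv (r_s s q) x d L /\ L <= 0.
Proof.
  intros Hs Hq Hx HC Hg.
  destruct (rs_dirderiv s q x d Hs Hq Hx) as (L & HD & Hpos & Hzero).
  exists L; split; [exact HD|].
  destruct (Rle_lt_or_eq_dec _ _ (Cq_secrecy_nonneg s q x Hs Hq Hx HC)) as [Hp|He].
  - rewrite (Hpos Hp). exact Hg.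
  - rewrite (Hzero (eq_sym He)), Rmax_left by lra. lra.
Qed.

Lemma segment_max_dirderiv (s : params) (q : nat) (x d : nat -> R) :
  valid_params s -> (q < NQ s)%nat -> nonneg_strategy (NJ s) x ->
  (forall t, 0 < t < 1 -> r_s s q (fun k => x k + t * d k) <= r_s s q x) ->
  exists L, is_dirderiv (r_s s q) x d L /\ L <= 0.
Proof.
  intros Hs Hq Hx Hm.
  destruct (rs_dirderiv s q x d Hs Hq Hx) as (L & HD & _).
  exists L; split; [exact HD|].
  apply (right_lim_nonpos _ _ HD).
  intros t Ht. specialize (Hm t Ht). unfold Rdiv.
  assert (0 < / t) by (apply Rinv_0_lt_compat; lra). nra.
Qed.

Lemma segment_max_grad (s : params) (q : nat) (x d : nat -> R) :
  valid_params s -> (q < NQ s)%nat -> nonneg_strategy (NJ s) x ->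
  (forall t, 0 < t < 1 -> rt_s s q (fun k => x k + t * d k) <= rt_s s q x) ->
  dotJ (NJ s) (secrecy_grad s q x) d <= 0.
Proof.
  intros Hs Hq Hx Hm.
  apply (derivable_local_max_nonpos _ _ (rt_line_deriv0 s q x d Hs Hq Hx)).
  intros t Ht. rewrite line_at_zero. apply Hm, Ht.
Qed.

Lemma BQGNE_Cq_QGNE_sm (s : params) (X : nat -> nat -> R) :
  valid_params s -> (BQGNE s X \/ rBQGNE s X) ->
  (forall q, (q < NQ s)%nat -> Cq s q (X q)) -> QGNE_sm s X.
Proof.
  intros Hs HB HC q Hq.
  assert (H : inPq s X q (X q) /\ forall v, inPsm s X q v ->
      exists L, is_dirderiv (r_s s q) (X q) (vsub v (X q)) L /\ L <= 0).
  { destruct HB as [HB|HB]; destruct (HB q Hq) as [H1 H2]; split; auto.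
    intros v [Hv _]; apply H2, Hv. }
  destruct H as [HX Hopt]. pose proof (proj1 HX) as Hnn.
  split; [split; [exact HX|apply HC, Hq]|].
  intros v Hv. exists (secrecy_grad s q (X q)).
  split; [apply rt_gradient; assumption|].
  destruct (Hopt v Hv) as (L & HD & HL).
  exact (dirderiv_nonpos_grad s q (X q) _ L Hs Hq Hnn (HC q Hq) HD HL).
Qed.

Lemma QGNE_sm_rBQGNE (s : params) (X : nat -> nat -> R) :
  valid_params s -> QGNE_sm s X -> rBQGNE s X.
Proof.
  intros Hs HQ q Hq. destruct (HQ q Hq) as [[HX HC] Hopt]. pose proof (proj1 HX) as Hnn.
  split; [exact HX|]. intros v Hv.
  destruct (Hopt v Hv) as (g & Hg & Hdot).
  apply (grad_nonpos_dirderiv s q (X q) _ Hs Hq Hnn HC).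
  unfold dotJ in *. rewrite (rsum_ext _ _ (fun k => g k * vsub v (X q) k)); [exact Hdot|].
  intros k Hk. rewrite (rt_gradient_unique s q (X q) g Hs Hq Hnn Hg k) by lia. reflexivity.
Qed.

(* Since each utility depends only on the
   player's own strategy, a maximizer of the potential [sum_q g q (X q)] over
   the feasible profiles is a profile of best responses. *)

Definition joint_feasible (s : params) (Ce : nat -> (nat -> R) -> R) (X : nat -> nat -> R) : Prop :=
  (forall q, (q < NQ s)%nat ->
     nonneg_strategy (NJ s) (X q) /\ X q 0%nat <= Pb s q /\ Ce q (X q) >= 0) /\
  (forall j, (j < NJ s)%nat -> rsum (NQ s) (fun r => X r (S j)) <= PJb s j).

Definition potential (s : params) (g : nat -> (nat -> R) -> R) (X : nat -> nat -> R) : R :=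
  rsum (NQ s) (fun r => g r (X r)).

(* The trivially satisfied constraint, describing the game G. *)
Definition no_constraint : nat -> (nat -> R) -> R := fun _ _ => 1.

Lemma potential_max_best_response (s : params) (Ce g : nat -> (nat -> R) -> R)
    (X : nat -> nat -> R) :
  joint_feasible s Ce X ->
  (forall Y, joint_feasible s Ce Y -> potential s g Y <= potential s g X) ->
  forall q, (q < NQ s)%nat -> forall v, inPq s X q v -> Ce q v >= 0 -> g q v <= g q (X q).
Proof.
  intros [HF1 HF2] Hmax q Hq v [Hv1 [Hv2 Hv3]] Hce.
  set (Y := fun r => if Nat.eq_dec r q then v else X r).
  assert (HY : joint_feasible s Ce Y).
  { split.
    - intros r Hr. unfold Y. destruct (Nat.eq_dec r q) as [-> | _]; [|apply HF1, Hr].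
      split; [exact Hv1|split; assumption].
    - intros j Hj. rewrite (rsum_ext _ _ (fun r => if Nat.eq_dec r q then v (S j) else X r (S j))).
      + apply Hv3, Hj.
      + intros r _. unfold Y. destruct (Nat.eq_dec r q); reflexivity. }
  specialize (Hmax Y HY). unfold potential in Hmax.
  rewrite (rsum_ext _ _ (fun r => if Nat.eq_dec r q then g q v else g r (X r))) in Hmax.
  - rewrite rsum_update in Hmax by exact Hq. lra.
  - intros r _. unfold Y. destruct (Nat.eq_dec r q) as [-> | _]; reflexivity.
Qed.

Lemma joint_feasible_inPq (s : params) (Ce : nat -> (nat -> R) -> R) (X : nat -> nat -> R) (q : nat) :
  joint_feasible s Ce X -> (q < NQ s)%nat -> inPq s X q (X q).
Proof.
  intros [HF1 HF2] Hq. destruct (HF1 q Hq) as (A & B & _).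
  split; [exact A|split; [exact B|]].
  intros j Hj. rewrite (rsum_ext _ _ (fun r => X r (S j))); [apply HF2, Hj|].
  intros r _. destruct (Nat.eq_dec r q) as [-> | _]; reflexivity.
Qed.

Lemma inPq_segment (s : params) (X : nat -> nat -> R) (q : nat) (x v : nat -> R) (t : R) :
  inPq s X q x -> inPq s X q v -> 0 <= t <= 1 ->
  inPq s X q (fun k => x k + t * vsub v x k).
Proof.
  intros [Hx1 [Hx2 Hx3]] [Hv1 [Hv2 Hv3]] Ht. unfold vsub.
  split; [|split].
  - intros k Hk. specialize (Hx1 k Hk). specialize (Hv1 k Hk). nra.
  - nra.
  - intros j Hj. specialize (Hx3 j Hj). specialize (Hv3 j Hj).
    rewrite (rsum_ext _ _ (fun r => (1 - t) * (if Nat.eq_dec r q then x (S j) else X r (S j))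
                                  + t * (if Nat.eq_dec r q then v (S j) else X r (S j)))).
    + rewrite rsum_plus, !rsum_scal. nra.
    + intros r _. destruct (Nat.eq_dec r q); ring.
Qed.

(* (C_q) is an affine constraint, hence also convex. *)
Lemma Cq_slack_segment (s : params) (q : nat) (x v : nat -> R) (t : R) :
  Cq_slack s q x >= 0 -> Cq_slack s q v >= 0 -> 0 <= t <= 1 ->
  Cq_slack s q (fun k => x k + t * vsub v x k) >= 0.
Proof.
  intros Hx Hv Ht.
  assert (E : Cq_slack s q (fun k => x k + t * vsub v x k)
              = (1 - t) * Cq_slack s q x + t * Cq_slack s q v).
  { unfold Cq_slack, vsub.
    rewrite (rsum_ext _ _ (fun j => (1 - t) * ((HSD s q * HJE s j - HSE s q * HJD s j q) * x (S j))
               + t * ((HSD s q * HJE s j - HSE s q * HJD s j q) * v (S j)))) by (intros; ring).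
    rewrite rsum_plus, !rsum_scal. ring. }
  rewrite E. nra.
Qed.

Lemma potential_max_BQGNE (s : params) (X : nat -> nat -> R) :
  valid_params s -> joint_feasible s no_constraint X ->
  (forall Y, joint_feasible s no_constraint Y ->
     potential s (r_s s) Y <= potential s (r_s s) X) ->
  BQGNE s X.
Proof.
  intros Hs HF Hmax q Hq. pose proof (joint_feasible_inPq s _ X q HF Hq) as HX.
  split; [exact HX|]. intros v Hv.
  apply segment_max_dirderiv; [exact Hs|exact Hq|apply (proj1 HF q Hq)|].
  intros t Ht. apply (potential_max_best_response s no_constraint (r_s s) X HF Hmax q Hq).
  - apply inPq_segment; [exact HX|exact Hv|lra].
  - unfold no_constraint. lra.
Qed.

Lemma potential_max_QGNE_sm (s : params) (X : nat -> nat -> R) :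
  valid_params s -> joint_feasible s (Cq_slack s) X ->
  (forall Y, joint_feasible s (Cq_slack s) Y ->
     potential s (rt_s s) Y <= potential s (rt_s s) X) ->
  QGNE_sm s X.
Proof.
  intros Hs HF Hmax q Hq. pose proof (joint_feasible_inPq s _ X q HF Hq) as HX.
  destruct (proj1 HF q Hq) as (Hnn & _ & HC).
  split; [split; [exact HX|exact HC]|]. intros v [Hv HCv].
  exists (secrecy_grad s q (X q)). split; [apply rt_gradient; assumption|].
  apply segment_max_grad; [exact Hs|exact Hq|exact Hnn|].
  intros t Ht. apply (potential_max_best_response s (Cq_slack s) (rt_s s) X HF Hmax q Hq).
  - apply inPq_segment; [exact HX|exact Hv|lra].
  - apply Cq_slack_segment; [exact HC|exact HCv|lra].
Qed.

Definition strategy_local (s : params) (g : nat -> (nat -> R) -> R) : Prop :=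
  forall q v w, (forall k, (k <= NJ s)%nat -> v k = w k) -> g q v = g q w.

Definition profiles_agree (s : params) (X Y : nat -> nat -> R) : Prop :=
  forall r k, (r < NQ s)%nat -> (k <= NJ s)%nat -> X r k = Y r k.

Lemma potential_agree (s : params) (g : nat -> (nat -> R) -> R) (X Y : nat -> nat -> R) :
  strategy_local s g -> profiles_agree s X Y -> potential s g X = potential s g Y.
Proof.
  intros Hg HA. apply rsum_ext. intros r Hr. apply Hg. intros k Hk. apply HA; assumption.
Qed.

Lemma joint_feasible_agree (s : params) (Ce : nat -> (nat -> R) -> R) (X Y : nat -> nat -> R) :
  strategy_local s Ce -> profiles_agree s X Y -> joint_feasible s Ce X -> joint_feasible s Ce Y.
Proof.
  intros Hg HA [F1 F2]. split.
  - intros q Hq. destruct (F1 q Hq) as (A & B & C). split; [|split].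
    + intros k Hk. rewrite <- (HA q k Hq Hk). apply A, Hk.
    + rewrite <- (HA q 0%nat Hq ltac:(lia)). exact B.
    + rewrite <- (Hg q (X q) (Y q)); [exact C|]. intros k Hk. apply HA; assumption.
  - intros j Hj. rewrite <- (rsum_ext _ (fun r => X r (S j))); [apply F2, Hj|].
    intros r Hr. apply HA; [exact Hr|lia].
Qed.

Lemma rt_s_local (s : params) : strategy_local s (rt_s s).
Proof.
  intros q v w H. rewrite !rt_s_rates. unfold rate_D, rate_E.
  rewrite (rate_local _ _ _ _ v w H), (rate_local _ _ _ _ v w H). reflexivity.
Qed.

Lemma r_s_local (s : params) : strategy_local s (r_s s).
Proof. intros q v w H. unfold r_s. rewrite (rt_s_local s q v w H). reflexivity. Qed.

Lemma Cq_slack_local (s : params) : strategy_local s (Cq_slack s).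
Proof.
  intros q v w H. unfold Cq_slack.
  rewrite (rsum_ext _ _ (fun j => (HSD s q * HJE s j - HSE s q * HJD s j q) * w (S j)));
    [reflexivity|].
  intros j Hj. rewrite (H (S j)) by lia. reflexivity.
Qed.

Lemma no_constraint_local (s : params) : strategy_local s no_constraint.
Proof. intros q v w _. reflexivity. Qed.

Fixpoint max_upto (n : nat) (F : nat -> R) : R :=
  match n with O => 0 | S n => Rmax (max_upto n F) (F n) end.

Lemma max_upto_nonpos (n : nat) (F : nat -> R) :
  max_upto n F <= 0 <-> (forall j, (j < n)%nat -> F j <= 0).
Proof.
  induction n; simpl; split.
  - intros; lia.
  - intros; lra.
  - intros H j Hj. destruct (Nat.eq_dec j n) as [-> | Hne].
    + eapply Rle_trans; [apply Rmax_r|exact H].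
    + apply IHn; [eapply Rle_trans; [apply Rmax_l|exact H]|lia].
  - intros H. apply Rmax_lub; [apply IHn; intros; apply H; lia|apply H; lia].
Qed.

(* The largest violation of the budget and [Ce] constraints; on nonnegative
   profiles, feasibility is the sublevel set [{violation <= 0}]. *)
Definition violation (s : params) (Ce : nat -> (nat -> R) -> R) (X : nat -> nat -> R) : R :=
  Rmax (max_upto (NQ s) (fun q => Rmax (X q 0%nat - Pb s q) (- Ce q (X q))))
       (max_upto (NJ s) (fun j => rsum (NQ s) (fun r => X r (S j)) - PJb s j)).

Lemma violation_feasible (s : params) (Ce : nat -> (nat -> R) -> R) (X : nat -> nat -> R) :
  (forall q, (q < NQ s)%nat -> nonneg_strategy (NJ s) (X q)) ->
  violation s Ce X <= 0 -> joint_feasible s Ce X.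
Proof.
  intros Hn H. unfold violation in H.
  pose proof (Rle_trans _ _ _ (Rmax_l _ _) H) as H1.
  pose proof (Rle_trans _ _ _ (Rmax_r _ _) H) as H2.
  rewrite max_upto_nonpos in H1, H2. split.
  - intros q Hq. specialize (H1 q Hq). cbv beta in H1.
    pose proof (Rmax_l (X q 0%nat - Pb s q) (- Ce q (X q))).
    pose proof (Rmax_r (X q 0%nat - Pb s q) (- Ce q (X q))).
    split; [apply Hn, Hq|split; lra].
  - intros j Hj. specialize (H2 j Hj). cbv beta in H2. lra.
Qed.

Lemma feasible_violation (s : params) (Ce : nat -> (nat -> R) -> R) (X : nat -> nat -> R) :
  joint_feasible s Ce X -> violation s Ce X <= 0.
Proof.
  intros [F1 F2]. unfold violation. apply Rmax_lub; apply max_upto_nonpos.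
  - intros q Hq. destruct (F1 q Hq) as (_ & B & C). apply Rmax_lub; lra.
  - intros j Hj. specialize (F2 j Hj). lra.
Qed.

(* Feasible profiles lie in a fixed box, the source of compactness. *)
Definition power_bound (s : params) : R := rsum (NQ s) (Pb s) + rsum (NJ s) (PJb s).

Lemma joint_feasible_bounded (s : params) (Ce : nat -> (nat -> R) -> R) (X : nat -> nat -> R) :
  valid_params s -> joint_feasible s Ce X ->
  forall q k, (q < NQ s)%nat -> (k <= NJ s)%nat -> 0 <= X q k <= power_bound s.
Proof.
  intros (_ & _ & _ & HP & HPJ & _) [F1 F2] q k Hq Hk.
  assert (HPpos : forall r, (r < NQ s)%nat -> 0 <= Pb s r) by (intros r Hr; left; apply (HP r Hr)).
  assert (HPJpos : forall j, (j < NJ s)%nat -> 0 <= PJb s j) by (intros j Hj; left; apply (HPJ j Hj)).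
  pose proof (rsum_nonneg _ _ HPpos). pose proof (rsum_nonneg _ _ HPJpos).
  destruct (F1 q Hq) as (A & B & _). split; [apply A, Hk|]. unfold power_bound.
  destruct k as [|j].
  - pose proof (rsum_le_term _ _ q HPpos Hq). lra.
  - assert (X q (S j) <= rsum (NQ s) (fun r => X r (S j))).
    { apply (rsum_le_term (NQ s) (fun r => X r (S j))); [|exact Hq].
      intros r Hr. apply (proj1 (F1 r Hr)); lia. }
    pose proof (rsum_le_term _ _ j HPJpos ltac:(lia)).
    pose proof (F2 j ltac:(lia)). lra.
Qed.

Lemma silent_feasible (s : params) :
  valid_params s -> joint_feasible s no_constraint (fun _ _ => 0).
Proof.
  intros (_ & _ & _ & HP & HPJ & _). split.
  - intros q Hq. unfold no_constraint. split; [intros k _; lra|].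
    split; [left; apply (HP q Hq)|lra].
  - intros j Hj. rewrite rsum_zero. left; apply (HPJ j Hj).
Qed.

Lemma P_nonempty_feasible (s : params) :
  P_nonempty s -> exists X, joint_feasible s (Cq_slack s) X.
Proof. intros (X & H1 & H2). exists X. split; [exact H1|exact H2]. Qed.

(* Existence of potential maximizers: the feasible profiles, encoded as row
   vectors, form a compact set on which the potentials are continuous, so the
   extreme value theorem of MathComp-Analysis applies. *)
From mathcomp Require all_boot all_order all_algebra.
From mathcomp Require all_classical all_reals all_analysis.
From mathcomp Require Rstruct Rstruct_topology.

Module PotentialMaximizer.

Import all_boot all_order all_algebra.
Import all_classical all_reals all_analysis.
Import Rstruct Rstruct_topology.
Import Order.TTheory GRing.Theory Num.Theory.

Local Open Scope classical_set_scope.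
Local Open Scope ring_scope.

Lemma box_sublevel_max {n : nat} (M : R) {f H : 'rV[R]_n -> R} :
  continuous f -> continuous H ->
  (exists v0 : 'rV[R]_n, (forall i, Rle 0 (v0 ord0 i) /\ Rle (v0 ord0 i) M) /\ Rle (H v0) 0) ->
  exists c : 'rV[R]_n, ((forall i, Rle 0 (c ord0 i) /\ Rle (c ord0 i) M) /\ Rle (H c) 0) /\
    (forall t : 'rV[R]_n, (forall i, Rle 0 (t ord0 i) /\ Rle (t ord0 i) M) -> Rle (H t) 0 ->
        Rle (f t) (f c)).
Proof.
move=> cf cH [v0 [bv0 Hv0]].
pose B := [set v : 'rV[R]_n | forall i, `[0, M]%classic (v ord0 i)].
pose C := H @^-1` [set x : R | x <= 0].
have inB (v : 'rV[R]_n) : (forall i, Rle 0 (v ord0 i) /\ Rle (v ord0 i) M) <-> B v.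
  split=> hv i; have := hv i; rewrite /= in_itv /=.
    by move=> [h1 h2]; apply/andP; split; apply/RleP.
  by move=> /andP[h1 h2]; split; apply/RleP.
have inC (v : 'rV[R]_n) : Rle (H v) 0 <-> C v by split=> /RleP.
have cB : compact B.
  by apply: (@rV_compact _ _ (fun=> `[0, M]%classic)) => i; exact: segment_compact.
have clC : closed C.
  by apply: preimage_closed; [move=> x _; exact: cH | exact: closed_le].
have A0 : (B `&` C) !=set0 by exists v0; split; [apply/inB | apply/inC].
have [c /[!in_setE] -[cB' cC'] cmax] :=
  EVT_max_rV A0 (compact_closedI cB clC) (@continuous_subspaceT _ _ (B `&` C) f cf).
exists c; split; first by split; [apply/inB | apply/inC].
move=> t bt Ht; apply/RleP; apply: cmax; rewrite in_setE.
by split; [apply/inB | apply/inC].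
Qed.

Lemma continuous_Rplus (T : topologicalType) (f g : T -> R) :
  continuous f -> continuous g -> continuous (fun v => Rplus (f v) (g v)).
Proof. by move=> cf cg x; exact: (@continuousD R R^o T f g x (cf x) (cg x)). Qed.

Lemma continuous_Rminus (T : topologicalType) (f g : T -> R) :
  continuous f -> continuous g -> continuous (fun v => Rminus (f v) (g v)).
Proof. by move=> cf cg x; exact: (@continuousB R R^o T f g x (cf x) (cg x)). Qed.

Lemma continuous_Ropp (T : topologicalType) (f : T -> R) :
  continuous f -> continuous (fun v => Ropp (f v)).
Proof. by move=> cf x; exact: (@continuousN R R^o T f x (cf x)). Qed.

Lemma continuous_Rmult (T : topologicalType) (f g : T -> R) :
  continuous f -> continuous g -> continuous (fun v => Rmult (f v) (g v)).
Proof. by move=> cf cg x; exact: (@continuousM R T f g x (cf x) (cg x)). Qed.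

Lemma continuous_Rdiv (T : topologicalType) (f g : T -> R) :
  (forall v, g v <> 0%coqR) -> continuous f -> continuous g ->
  continuous (fun v => Rdiv (f v) (g v)).
Proof.
move=> nz cf cg; apply: continuous_Rmult => // x.
by apply: (@continuousV R T g x); [apply/eqP; exact: nz | exact: cg].
Qed.

Lemma continuous_Rln (T : topologicalType) (f : T -> R) :
  (forall v, Rlt 0%coqR (f v)) -> continuous f -> continuous (fun v => Rpower.ln (f v)).
Proof.
move=> pos cf x.
have -> : (fun v => Rpower.ln (f v)) = ((@exp.ln R) \o f).
  by apply: funext => v /=; rewrite RlnE.
by apply: continuous_comp; [exact: cf | apply: continuous_ln; apply/RltP].
Qed.

Lemma continuous_Rmax (T : topologicalType) (f g : T -> R) :
  continuous f -> continuous g -> continuous (fun v => Rmax (f v) (g v)).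
Proof.
move=> cf cg x.
have -> : (fun v => Rmax (f v) (g v)) = (f \max g).
  by apply: funext => v /=; rewrite RmaxE.
exact: (@continuous_max R T f g x (cf x) (cg x)).
Qed.

Lemma continuous_rsum (T : topologicalType) (n : nat) (F : nat -> T -> R) :
  (forall j, Peano.lt j n -> continuous (F j)) -> continuous (fun v => rsum n (fun j => F j v)).
Proof.
elim: n => [|n IH] H /=; first exact: cst_continuous.
apply: continuous_Rplus; first by apply: IH => j Hj; apply: H; lia.
by apply: H; lia.
Qed.

Lemma continuous_max_upto (T : topologicalType) (n : nat) (F : nat -> T -> R) :
  (forall j, Peano.lt j n -> continuous (F j)) ->
  continuous (fun v => max_upto n (fun j => F j v)).
Proof.
elim: n => [|n IH] H /=; first exact: cst_continuous.
apply: continuous_Rmax; first by apply: IH => j Hj; apply: H; lia.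
by apply: H; lia.
Qed.

Lemma continuous_rate (T : topologicalType) (h sig : R) (J : nat) (c : nat -> R)
    (F : T -> nat -> R) :
  Rlt 0 sig -> Rle 0 h -> (forall j, Peano.lt j J -> Rle 0 (c j)) ->
  (forall v, nonneg_strategy J (F v)) -> (forall k, continuous (fun v => F v k)) ->
  continuous (fun v => rate h sig J c (F v)).
Proof.
move=> Hsig Hh Hc Hnn cF.
have wp v := rate_well_posed h sig J c (F v) Hsig Hh Hc (Hnn v).
apply: continuous_Rln.
  move=> v; have [I0 N0] := wp v.
  have := Rdiv_nonneg _ _ N0 I0; rewrite /interference; lra.
apply: continuous_Rplus; first exact: cst_continuous.
apply: continuous_Rdiv.
- by move=> v; have [I0 _] := wp v; apply: Rgt_not_eq.
- by apply: continuous_Rmult; [exact: cst_continuous | exact: cF].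
- apply: continuous_Rplus; first exact: cst_continuous.
  by apply: continuous_rsum => j _; apply: continuous_Rmult; [exact: cst_continuous | exact: cF].
Qed.

(* Profiles are encoded as row vectors of length [NQ * (NJ + 1)]: entry
   [q * (NJ + 1) + k] holds [X q k]; decoding clips to nonnegative values. *)

Definition width (s : params) : nat := (NJ s).+1.
Definition dim (s : params) : nat := (NQ s * width s)%N.

Definition entry (s : params) (v : 'rV[R]_(dim s)) (i : nat) : R :=
  if (insub i : option 'I_(dim s)) is Some j then v ord0 j else 0%R.

Definition decode (s : params) (v : 'rV[R]_(dim s)) : nat -> nat -> R :=
  fun q k => Rmax 0%R (entry s v (q * width s + k)%N).

Definition encode (s : params) (Y : nat -> nat -> R) : 'rV[R]_(dim s) :=
  \row_(i < dim s) Y (i %/ width s)%N (i %% width s)%N.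

Lemma continuous_decode (s : params) (q k : nat) :
  continuous (fun v : 'rV[R]_(dim s) => decode s v q k).
Proof.
apply: continuous_Rmax; first exact: cst_continuous.
rewrite /entry; case: (insub _) => [j|]; last exact: cst_continuous.
exact: (@coord_continuous R 1 (dim s) ord0 j).
Qed.

Lemma decode_nonneg (s : params) (v : 'rV[R]_(dim s)) (q : nat) :
  nonneg_strategy (NJ s) (decode s v q).
Proof. by move=> k _; exact: Rmax_l. Qed.

Lemma entry_encode (s : params) (Y : nat -> nat -> R) (q k : nat) :
  Peano.lt q (NQ s) -> Peano.le k (NJ s) -> entry s (encode s Y) (q * width s + k)%N = Y q k.
Proof.
move=> /ssrnat.ltP Hq /ssrnat.leP Hk.
have Hk' : (k < width s)%N by rewrite /width ltnS.
have Hb : (q * width s + k < dim s)%N.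
  rewrite /dim; apply: (@leq_trans (q * width s + width s)%N); first by rewrite ltn_add2l.
  by rewrite -mulSnr leq_mul2r Hq orbT.
rewrite /entry insubT /= mxE.
by rewrite divnMDl // divn_small // addn0 modnMDl modn_small.
Qed.

Lemma decode_encode (s : params) (Ce : nat -> (nat -> R) -> R) (Y : nat -> nat -> R) :
  joint_feasible s Ce Y -> profiles_agree s Y (decode s (encode s Y)).
Proof.
move=> [F1 _] r k Hr Hk; rewrite /decode entry_encode //.
by rewrite Rmax_right //; have [A _] := F1 r Hr; apply: A.
Qed.

Lemma encode_entry (s : params) (Y : nat -> nat -> R) (i : 'I_(dim s)) :
  exists q k, Peano.lt q (NQ s) /\ Peano.le k (NJ s) /\ encode s Y ord0 i = Y q k.
Proof.
exists (i %/ width s)%N, (i %% width s)%N; split; last split.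
- by apply/ssrnat.ltP; rewrite ltn_divLR //; exact: (ltn_ord i).
- by apply/ssrnat.leP; rewrite -ltnS; exact: ltn_pmod.
- by rewrite mxE.
Qed.

Lemma potential_maximizer (s : params) (Hs : valid_params s) (g Ce : nat -> (nat -> R) -> R) :
  strategy_local s g -> strategy_local s Ce ->
  (forall q, Peano.lt q (NQ s) -> continuous (fun v : 'rV[R]_(dim s) => g q (decode s v q))) ->
  (forall q, Peano.lt q (NQ s) -> continuous (fun v : 'rV[R]_(dim s) => Ce q (decode s v q))) ->
  (exists X0, joint_feasible s Ce X0) ->
  exists X, joint_feasible s Ce X /\
    forall Y, joint_feasible s Ce Y -> Rle (potential s g Y) (potential s g X).
Proof.
move=> lg lC cg cC [X0 F0].
pose f := fun v : 'rV[R]_(dim s) => potential s g (decode s v).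
pose H := fun v : 'rV[R]_(dim s) => violation s Ce (decode s v).
have cf : continuous f by apply: continuous_rsum => q Hq; exact: cg.
have cH : continuous H.
  apply: continuous_Rmax; apply: continuous_max_upto => q Hq.
    apply: continuous_Rmax; last by apply: continuous_Ropp; exact: cC.
    by apply: continuous_Rminus; [exact: continuous_decode | exact: cst_continuous].
  apply: continuous_Rminus; last exact: cst_continuous.
  by apply: continuous_rsum => r Hr; exact: continuous_decode.
have box Y : joint_feasible s Ce Y ->
    forall i, Rle 0 (encode s Y ord0 i) /\ Rle (encode s Y ord0 i) (power_bound s).
  move=> FY i; have [q [k [Hq [Hk ->]]]] := encode_entry s Y i.
  exact: (joint_feasible_bounded s Ce Y Hs FY q k Hq Hk).
have HV Y : joint_feasible s Ce Y -> Rle (H (encode s Y)) 0.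
  move=> FY; apply: feasible_violation.
  exact: (joint_feasible_agree s Ce Y _ lC (decode_encode s Ce Y FY) FY).
have [c [[_ Hc] cmax]] := box_sublevel_max (power_bound s) cf cH (ex_intro _ _ (conj (box X0 F0) (HV X0 F0))).
exists (decode s c); split.
  by apply: violation_feasible => // q _; exact: decode_nonneg.
move=> Y FY; have := cmax (encode s Y) (box Y FY) (HV Y FY).
by rewrite /f -(potential_agree s g Y _ lg (decode_encode s Ce Y FY)).
Qed.

Lemma continuous_rt_s (s : params) (Hs : valid_params s) (q : nat) :
  Peano.lt q (NQ s) -> continuous (fun v : 'rV[R]_(dim s) => rt_s s q (decode s v q)).
Proof.
move=> Hq; have [_ [_ [Hsig [HP [HPJ HJD]]]]] := Hs; have [_ [HSDq HSEq]] := HP q Hq.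
have nnF v := decode_nonneg s v q.
have cF k := continuous_decode s q k.
apply: (@continuous_Rminus _ (fun v => rate_D s q (decode s v q))
                             (fun v => rate_E s q (decode s v q))).
  apply: (@continuous_rate _ _ _ _ _ (fun v => decode s v q)) => //; first by left.
  by move=> j Hj; left; exact: HJD.
apply: (@continuous_rate _ _ _ _ _ (fun v => decode s v q)) => //; first by left.
by move=> j Hj; left; have [_ ?] := HPJ j Hj.
Qed.

Lemma clipped_potential_maximizer (s : params) (Hs : valid_params s) :
  exists X, joint_feasible s no_constraint X /\
    forall Y, joint_feasible s no_constraint Y -> Rle (potential s (r_s s) Y) (potential s (r_s s) X).
Proof.
apply: (potential_maximizer s Hs _ _ (r_s_local s) (no_constraint_local s)).
- move=> q Hq; apply: continuous_Rmax; first exact: cst_continuous.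
  exact: continuous_rt_s.
- by move=> q _; exact: cst_continuous.
- by exists (fun _ _ => 0%coqR); exact: silent_feasible.
Qed.

Lemma smooth_potential_maximizer (s : params) (Hs : valid_params s) :
  P_nonempty s ->
  exists X, joint_feasible s (Cq_slack s) X /\
    forall Y, joint_feasible s (Cq_slack s) Y -> Rle (potential s (rt_s s) Y) (potential s (rt_s s) X).
Proof.
move=> Hne; apply: (potential_maximizer s Hs _ _ (rt_s_local s) (Cq_slack_local s)).
- exact: continuous_rt_s.
- move=> q _; apply: continuous_Rplus; last exact: cst_continuous.
  apply: continuous_rsum => j _.
  by apply: continuous_Rmult; [exact: cst_continuous | exact: continuous_decode].
- exact: P_nonempty_feasible.
Qed.

End PotentialMaximizer.

Theorem proposition2 (s : params) (Hs : valid_params s) :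
  (exists X, BQGNE s X) /\
  (P_nonempty s -> (exists X, QGNE_sm s X) /\ (exists X, rBQGNE s X)) /\
  (forall X, (BQGNE s X \/ rBQGNE s X) ->
     (forall q, (q < NQ s)%nat -> Cq s q (X q)) -> QGNE_sm s X) /\
  (forall X, QGNE_sm s X -> rBQGNE s X).
Proof.
  split; [|split; [|split]].
  - destruct (PotentialMaximizer.clipped_potential_maximizer s Hs) as (X & HF & Hmax).
    exists X. exact (potential_max_BQGNE s X Hs HF Hmax).
  - intros Hne.
    destruct (PotentialMaximizer.smooth_potential_maximizer s Hs Hne) as (X & HF & Hmax).
    pose proof (potential_max_QGNE_sm s X Hs HF Hmax) as HQ.
    split; exists X; [exact HQ|exact (QGNE_sm_rBQGNE s X Hs HQ)].
  - intros X HB HC. exact (BQGNE_Cq_QGNE_sm s X Hs HB HC).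
  - intros X HQ. exact (QGNE_sm_rBQGNE s X Hs HQ).
Qed.
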